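(* Let $G$ be a finite two-player zero-sum game with finite pure strategy sets $S_1,S_2$ and payoffs $v_1=-v_2$, extended bilinearly to mixed strategies, and let $\epsilon\ge 0$. Consider RM-BR DO: populations $\Pi^t_1\subseteq S_1$, $\Pi^t_2\subseteq S_2$ are maintained, starting from nonempty $\Pi^0_i$; at iteration $t$ a restricted profile $\pi^t=(\pi^t_1,\pi^t_2)$ with $\pi^t_i\in\Delta(\Pi^t_i)$ is computed (by regret minimization of player $i$ over $\Pi^t_i$ against best responses of the unrestricted opponent), and then for each $i$ a pure best response of player $i$ to $\pi^t_{-i}$ is added, $\Pi^{t+1}_i=\Pi^t_i\cup\{\beta_i\}$. Assume that in each iteration enough inner-loop updates are run that the exploitability in each restricted game is at most $\epsilon$, i.e. for each $i$ and $t$, $$\min_{\sigma_{-i}\in\Delta(S_{-i})}v_i(\pi^t_i,\sigma_{-i})\ \ge\ \max_{\sigma_i\in\Delta(\Pi^t_i)}\min_{\sigma_{-i}\in\Delta(S_{-i})}v_i(\sigma_i,\sigma_{-i})-\epsilon .$$ Then the exploitability never increases by more than $2\epsilon$ from one iteration to the next: $e(\pi^{t+1})\le e(\pi^t)+2\epsilon$ for every $t$.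
   Context: $\Delta(X)$ denotes the set of mixed strategies supported on the set $X$ of pure strategies. The exploitability of a profile $\pi=(\pi_1,\pi_2)$ is $e(\pi)=\sum_{i\in\{1,2\}}\max_{\pi_i'}v_i(\pi_i',\pi_{-i})$, maximizing over all mixed strategies of player $i$ in the full game. A best response of player $i$ to $\pi_{-i}$ is a strategy maximizing $v_i(\cdot,\pi_{-i})$. *)

From HB Require Import structures.
From mathcomp Require Import all_boot all_order all_algebra.
From mathcomp Require Import all_classical all_reals.
Set Implicit Arguments. Unset Strict Implicit. Unset Printing Implicit Defensive.
Import Order.TTheory GRing.Theory Num.Theory.
Local Open Scope ring_scope.
Local Open Scope classical_set_scope.

Section Game.
Context {R : realType}.

Definition Delta (S : finType) (A : {set S}) : set {ffun S -> R} :=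
  [set x | (forall s, 0 <= x s) /\ \sum_(s : S) x s = 1 /\
           (forall s, s \notin A -> x s = 0)].

Definition pure (S : finType) (b : S) : {ffun S -> R} :=
  [ffun s => if s == b then 1 else 0].

Definition payoff1 (S1 S2 : finType) (v : S1 -> S2 -> R)
  (x : {ffun S1 -> R}) (y : {ffun S2 -> R}) : R :=
  \sum_(i : S1) \sum_(j : S2) x i * y j * v i j.

Definition payoff2 (S1 S2 : finType) (v : S1 -> S2 -> R)
  (x : {ffun S1 -> R}) (y : {ffun S2 -> R}) : R := - payoff1 v x y.

Definition exploitability (S1 S2 : finType) (v : S1 -> S2 -> R)
  (x : {ffun S1 -> R}) (y : {ffun S2 -> R}) : R :=
  sup [set payoff1 v x' y | x' in Delta [set: S1]] +
  sup [set payoff2 v x y' | y' in Delta [set: S2]].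

End Game.

(** The exploitability of a profile is minus the sum of the two players'
    security levels (guaranteed payoffs against an unrestricted opponent).
    The profile of iteration [t] is still available in the grown population
    of iteration [t+1], so the best restricted security level at [t+1] is at
    least the security level reached at [t]; since the inner loop gets within
    [eps] of that best level, each player's security level drops by at most
    [eps], and the exploitability rises by at most [2 eps]. *)
From HB Require Import structures.
From mathcomp Require Import all_boot all_order all_algebra.
From mathcomp Require Import all_classical all_reals.
From mathcomp Require Import lra.
Import Order.TTheory GRing.Theory Num.Theory.
Local Open Scope ring_scope.
Local Open Scope classical_set_scope.

Set Implicit Arguments.
Unset Strict Implicit.

Section SupInf.
Context {R : realType}.

Lemma sup_image_inf (T : Type) (A : set T) (f : T -> R) :
  sup [set f x | x in A] = - inf [set - f x | x in A].
Proof.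
rewrite /inf opprK image_comp; congr sup.
by apply: eq_imagel => x _ /=; rewrite opprK.
Qed.

(* The bound [M] is needed because [sup] of a set with no upper bound is [0]. *)
Lemma inf_image_le_sup (T U : Type) (A : set T) (B : set U)
    (f : T -> U -> R) (M : R) (x : T) :
  (forall x y, A x -> B y -> `|f x y| <= M) -> A x ->
  inf [set f x y | y in B] <= sup [set inf [set f x' y | y in B] | x' in A].
Proof.
move=> f_bounded Ax; apply: ub_le_sup; last by exists x.
have [B0 | /set0P [y0 By0]] := eqVneq B set0.
  by exists 0 => _ [x' _ <-]; rewrite B0 image_set0 inf0.
exists M => _ [x' Ax' <-].
have lb : has_lbound [set f x' y | y in B].
  exists (- M) => _ [y By <-].
  by move: (f_bounded _ _ Ax' By); rewrite ler_norml => /andP[].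
apply: le_trans (ge_inf lb (imageP _ By0)) _.
exact: le_trans (ler_norm _) (f_bounded _ _ Ax' By0).
Qed.

End SupInf.

Section Payoffs.
Context {R : realType} {S1 S2 : finType} (v : S1 -> S2 -> R).

Lemma Delta_subset (S : finType) (A B : {set S}) (x : {ffun S -> R}) :
  A \subset B -> Delta A x -> Delta B x.
Proof.
move=> /fintype.subsetP AB [x_ge0 [x_sum1 x_supp]]; split=> //; split=> // s sB.
by apply: x_supp; apply: contra sB; exact: AB.
Qed.

Lemma Delta_le1 (S : finType) (A : {set S}) (x : {ffun S -> R}) (s : S) :
  Delta A x -> 0 <= x s <= 1.
Proof.
case=> [x_ge0 [x_sum1 _]]; rewrite x_ge0 /= -x_sum1 (bigD1 s) //= lerDl.
by apply: sumr_ge0 => i _.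
Qed.

Lemma norm_payoff1_le (A : {set S1}) (B : {set S2}) x y :
  Delta A x -> Delta B y -> `|payoff1 v x y| <= \sum_i \sum_j `|v i j|.
Proof.
move=> Dx Dy; apply: le_trans (ler_norm_sum _ _ _) _; apply: ler_sum => i _.
apply: le_trans (ler_norm_sum _ _ _) _; apply: ler_sum => j _.
have /andP[xi_ge0 xi_le1] := Delta_le1 i Dx.
have /andP[yj_ge0 yj_le1] := Delta_le1 j Dy.
by rewrite !normrM (ger0_norm xi_ge0) (ger0_norm yj_ge0) ler_piMl // mulr_ile1.
Qed.

Lemma norm_payoff2_le (A : {set S1}) (B : {set S2}) x y :
  Delta A x -> Delta B y -> `|payoff2 v x y| <= \sum_i \sum_j `|v i j|.
Proof. by rewrite /payoff2 normrN; exact: norm_payoff1_le. Qed.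

Lemma exploitabilityE x y :
  exploitability v x y =
  - inf [set payoff2 v x' y | x' in Delta [set: S1]]
  - inf [set payoff1 v x y' | y' in Delta [set: S2]].
Proof.
rewrite /exploitability !sup_image_inf; congr (- inf _ - inf _).
by apply: eq_imagel => y' _; rewrite /payoff2 opprK.
Qed.

End Payoffs.

Unset Implicit Arguments.

Theorem proposition4 (R : realType) (S1 S2 : finType) (v : S1 -> S2 -> R)
  (eps : R) (heps : 0 <= eps)
  (P1 : nat -> {set S1}) (P2 : nat -> {set S2})
  (pi1 : nat -> {ffun S1 -> R}) (pi2 : nat -> {ffun S2 -> R})
  (b1 : nat -> S1) (b2 : nat -> S2)
  (hP10 : (0 < #|P1 0%N|)%N) (hP20 : (0 < #|P2 0%N|)%N)
  (hpi1 : forall t, Delta (P1 t) (pi1 t))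
  (hpi2 : forall t, Delta (P2 t) (pi2 t))
  (hb1 : forall t, forall x, Delta [set: S1] x ->
           payoff1 v x (pi2 t) <= payoff1 v (pure (b1 t)) (pi2 t))
  (hb2 : forall t, forall y, Delta [set: S2] y ->
           payoff2 v (pi1 t) y <= payoff2 v (pi1 t) (pure (b2 t)))
  (hP1 : forall t, P1 t.+1 = b1 t |: P1 t)
  (hP2 : forall t, P2 t.+1 = b2 t |: P2 t)
  (heps1 : forall t,
     inf [set payoff1 v (pi1 t) y | y in Delta [set: S2]] >=
     sup [set inf [set payoff1 v x y | y in Delta [set: S2]]
           | x in Delta (P1 t)] - eps)
  (heps2 : forall t,
     inf [set payoff2 v x (pi2 t) | x in Delta [set: S1]] >=
     sup [set inf [set payoff2 v x y | x in Delta [set: S1]]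
           | y in Delta (P2 t)] - eps) :
  forall t, exploitability v (pi1 t.+1) (pi2 t.+1) <=
            exploitability v (pi1 t) (pi2 t) + 2 * eps.
Proof.
move=> t.
have pi1_grown : Delta (P1 t.+1) (pi1 t).
  by apply: Delta_subset (hpi1 t); rewrite hP1 finset.subsetUr.
have pi2_grown : Delta (P2 t.+1) (pi2 t).
  by apply: Delta_subset (hpi2 t); rewrite hP2 finset.subsetUr.
have security1 := inf_image_le_sup (A := Delta (P1 t.+1))
  (B := Delta [set: S2]) (f := payoff1 v)
  (fun x y Dx Dy => norm_payoff1_le v Dx Dy) pi1_grown.
have security2 := inf_image_le_sup (A := Delta (P2 t.+1))
  (B := Delta [set: S1]) (f := fun y x => payoff2 v x y)
  (fun y x Dy Dx => norm_payoff2_le v Dx Dy) pi2_grown.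
have := heps1 t.+1; have := heps2 t.+1.
rewrite !exploitabilityE; lra.
Qed.
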